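(* Let $T$ be a tree with $n$ vertices. Then there exists a category system $\mathcal S$ on the vertex set of $T$ such that the greedy category-based routing strategy ROUTING correctly routes messages between all pairs of vertices of $T$ and $\operatorname{memdim}(\mathcal S)=O\big((\operatorname{diam}(T)+\log n)^2\big)$.
   Context: A category system for a graph with vertex set $U$ is a family $\mathcal S\subset 2^U$. For $u\in U$ let $\mathrm{cat}(u)=\{C\in\mathcal S: u\in C\}$; the membership dimension is $\operatorname{memdim}(\mathcal S)=\max_{u\in U}|\mathrm{cat}(u)|$. For $s,t\in U$ define $d(s,t)=|\mathrm{cat}(t)\setminus \mathrm{cat}(s)|$. $N(u)$ is the set of neighbors of $u$, and $\operatorname{diam}$ is the maximum shortest-path distance between two vertices. ROUTING: a node $u$ holding a message for destination $w\neq u$ forwards it to a neighbor $v\in N(u)$ with $d(v,w)<d(u,w)$. ROUTING correctly routes messages between all pairs of vertices if for every ordered pair of distinct vertices $u,w$ there is a neighbor $v\in N(u)$ with $d(v,w)<d(u,w)$. *)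

From mathcomp Require Import all_boot.
Set Implicit Arguments. Unset Strict Implicit. Unset Printing Implicit Defensive.

Definition simple_graph (T : finType) (e : rel T) : Prop :=
  symmetric e /\ irreflexive e.

Definition connected_graph (T : finType) (e : rel T) : Prop :=
  forall x y : T, connect e x y.

Definition acyclic (T : finType) (e : rel T) : Prop :=
  forall c : seq T, uniq c -> 2 < size c -> ~~ cycle e c.

Definition is_tree (T : finType) (e : rel T) : Prop :=
  simple_graph e /\ connected_graph e /\ acyclic e.

Fixpoint ball (T : finType) (e : rel T) (k : nat) (x : T) : {set T} :=
  match k with
  | 0 => [set x]
  | k'.+1 => ball e k' x :|: [set y | [exists z in ball e k' x, e z y]]
  end.

(* shortest-path distance (for a connected graph it is < #|T|) *)
Definition gdist (T : finType) (e : rel T) (x y : T) : nat :=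
  find (fun k => y \in ball e k x) (iota 0 #|T|).

Definition diam (T : finType) (e : rel T) : nat :=
  \max_(x : T) \max_(y : T) gdist e x y.

Definition cat (T : finType) (S : {set {set T}}) (u : T) : {set {set T}} :=
  [set C in S | u \in C].

Definition memdim (T : finType) (S : {set {set T}}) : nat :=
  \max_(u : T) #|cat S u|.

Definition cdist (T : finType) (S : {set {set T}}) (s t : T) : nat :=
  #|cat S t :\: cat S s|.

Definition routing_correct (T : finType) (e : rel T) (S : {set {set T}}) : Prop :=
  forall u w : T, u != w -> exists v : T, e u v /\ cdist S v w < cdist S u w.

From Pilot Require Import Defs.
From mathcomp Require Import all_boot zify.

(** Root the graph at a vertex r and take a breadth-first spanning tree, so
    that every vertex other than r has a parent one level closer to r; only
    connectedness is used, acyclicity never is.  The categories are: the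
    subtree below each vertex; for each depth i, bit position j and bit b, the
    vertices of depth < i together with those whose depth-i ancestor has bit j
    of its index equal to b; and for each i the vertices of depth <= i.  A
    vertex lies in at most D + 1 subtrees (one per ancestor), so the membership
    dimension is O(D log n) with D the diameter.  Routing from u to w: if u is
    a proper ancestor of w, step to the child of u towards w, which gains that
    child's subtree and loses nothing shared with w; otherwise step to the
    parent of u, which loses nothing shared with w and gains either a level
    set (if w is shallower than u) or a bit category telling w's ancestor at
    u's depth apart from u. *)

Set Implicit Arguments.
Unset Strict Implicit.
Unset Printing Implicit Defensive.

Definition bit j n := odd (n %/ 2 ^ j).

Lemma exists_bit_neq L a b : a < 2 ^ L -> b < 2 ^ L -> a != b ->
  exists2 j, j < L & bit j a != bit j b.
Proof.
elim: L a b => [|L IHL] a b; first by rewrite expn0 !ltnS !leqn0 => /eqP-> /eqP->.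
move=> ltaL ltbL neq_ab.
have [eq_odd | neq_odd] := eqVneq (odd a) (odd b); last first.
  by exists 0; rewrite // /bit expn0 !divn1.
have neq_half : a./2 != b./2.
  apply: contra neq_ab => /eqP eq_half.
  by rewrite -(odd_double_half a) -(odd_double_half b) eq_half eq_odd.
have [j ltjL neq_j] : exists2 j, j < L & bit j a./2 != bit j b./2.
  by apply: IHL => //; rewrite -divn2 ltn_divLR // -expnSr.
by exists j.+1; rewrite // /bit expnS !divnMA !divn2.
Qed.

Lemma cdist_lt (T : finType) (S : {set {set T}}) u v w :
  (forall C, C \in S -> u \in C -> w \in C -> v \in C) ->
  (exists2 C, C \in S & [/\ v \in C, w \in C & u \notin C]) ->
  cdist S v w < cdist S u w.
Proof.
move=> closed_v [C0 C0S [vC0 wC0 uC0]]; apply/proper_card/properP; split.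
  apply/subsetP => C; rewrite !inE => /andP [+ /andP [CS wC]].
  by rewrite CS wC /= andbT; apply: contra => /(closed_v _ CS); apply.
by exists C0; rewrite !inE C0S wC0 ?uC0 ?vC0.
Qed.

Section BreadthFirstTree.
Variables (T : finType) (e : rel T).
Hypothesis e_connected : connected_graph e.

Lemma subset_ball x k m : k <= m -> ball e k x \subset ball e m x.
Proof.
elim: m => [|m IHm]; first by rewrite leqn0 => /eqP->.
rewrite leq_eqVlt => /orP [/eqP-> // | /IHm sub_km].
exact: subset_trans sub_km (subsetUl _ _).
Qed.

Lemma ball_succ x k y z : y \in ball e k x -> e y z -> z \in ball e k.+1 x.
Proof. by move=> yk eyz; apply/setUP; right; rewrite inE; apply/existsP; exists y; rewrite yk. Qed.

Lemma last_path_ball x p : path e x p -> last x p \in ball e (size p) x.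
Proof.
elim/last_ind: p => [|p z IHp]; first by rewrite inE.
by rewrite rcons_path last_rcons size_rcons => /andP [/IHp px ez]; exact: ball_succ px ez.
Qed.

Lemma mem_ball_card x y : y \in ball e #|T|.-1 x.
Proof.
have /connectP [p ep ->] := e_connected x y.
have [q eq uniq_q _] := shortenP ep.
have size_q : size q <= #|T|.-1.
  by have := max_card (mem (x :: q)); rewrite (card_uniqP uniq_q) /=; case: #|T|.
exact: subsetP (subset_ball x size_q) _ (last_path_ball eq).
Qed.

Lemma has_ball x y : has (fun k => y \in ball e k x) (iota 0 #|T|).
Proof.
apply/hasP; exists #|T|.-1; last exact: mem_ball_card.
have : 0 < #|T| by apply/card_gt0P; exists x.
by rewrite mem_iota; lia.
Qed.

Lemma gdist_lt x y : gdist e x y < #|T|.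
Proof. by have := has_ball x y; rewrite has_find size_iota. Qed.

Lemma mem_ball_gdist x y : y \in ball e (gdist e x y) x.
Proof. by have := nth_find 0 (has_ball x y); rewrite nth_iota ?size_iota ?gdist_lt. Qed.

Lemma gdist_le x y k : y \in ball e k x -> gdist e x y <= k.
Proof.
move=> yk; rewrite leqNgt; apply/negP => lt_k.
have lt_kT : k < #|T| by have := gdist_lt x y; lia.
by have := before_find 0 lt_k; rewrite nth_iota // add0n yk.
Qed.

Lemma gdist_eq0 x y : gdist e x y = 0 -> y = x.
Proof. by move=> dxy; have := mem_ball_gdist x y; rewrite dxy inE => /eqP. Qed.

Lemma gdist_le_diam x y : gdist e x y <= diam e.
Proof.
apply: leq_trans (leq_bigmax x).
exact: leq_bigmax (fun y => gdist e x y) y.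
Qed.

Lemma diam_gt0 (x y : T) : x != y -> 0 < diam e.
Proof.
move=> neq_xy; apply: leq_trans (gdist_le_diam x y); rewrite lt0n.
by apply: contra neq_xy => /eqP/gdist_eq0->.
Qed.

Variable r : T.

Definition depth x := gdist e r x.

Lemma depth_eq0 x : depth x = 0 -> x = r.
Proof. exact: gdist_eq0. Qed.

Lemma exists_parent x : 0 < depth x ->
  exists z, e z x && (depth z == (depth x).-1).
Proof.
rewrite /depth; have := gdist_le (x := r) (y := x).
case: (gdist e r x) (mem_ball_gdist r x) => // k /setUP [xk | xk] min_x _.
  by have := min_x k xk; rewrite ltnn.
move: xk; rewrite inE => /existsP [z /andP [zk ezx]]; exists z; rewrite ezx /=.
have le_zk := gdist_le zk.
have /min_x : x \in ball e (gdist e r z).+1 r by exact: ball_succ (mem_ball_gdist r z) ezx.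
by rewrite ltnS => le_kz; apply/eqP; lia.
Qed.

Definition parent x := odflt x [pick z | e z x && (depth z == (depth x).-1)].

Lemma depth_parent x : depth (parent x) = (depth x).-1.
Proof.
rewrite /parent; case: pickP => [z /andP [_ /eqP] // | no_parent] /=.
have [-> // | depth_gt0] := posnP (depth x).
by have [z] := exists_parent depth_gt0; rewrite no_parent.
Qed.

Lemma parent_edge x : 0 < depth x -> e (parent x) x.
Proof.
move=> depth_gt0; rewrite /parent; case: pickP => [z /andP [] // | no_parent].
by have [z] := exists_parent depth_gt0; rewrite no_parent.
Qed.

Definition anc x i := iter (depth x - i) parent x.

Lemma depth_anc x i : i <= depth x -> depth (anc x i) = i.
Proof.
have depth_iter m : depth (iter m parent x) = depth x - m.
  by elim: m => [|m IHm]; rewrite ?subn0 // iterS depth_parent IHm subnS.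
by move=> le_ix; rewrite depth_iter subKn.
Qed.

Lemma anc_depth x : anc x (depth x) = x.
Proof. by rewrite /anc subnn. Qed.

Lemma anc_anc x k i : i <= k -> k <= depth x -> anc (anc x k) i = anc x i.
Proof.
move=> le_ik le_kx; rewrite {1}/anc depth_anc // /anc -iterD.
by congr iter; lia.
Qed.

Lemma parent_anc x k : 0 < k -> k <= depth x -> parent (anc x k) = anc x k.-1.
Proof.
by move=> k_gt0 le_kx; rewrite /anc -iterS; have -> : depth x - k.-1 = (depth x - k).+1 by lia.
Qed.

Definition is_anc y x := (depth y <= depth x) && (anc x (depth y) == y).

Lemma is_anc_anc x i : i <= depth x -> is_anc (anc x i) x.
Proof. by move=> le_ix; rewrite /is_anc depth_anc ?le_ix ?eqxx. Qed.

Lemma is_ancxx x : is_anc x x.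
Proof. by rewrite /is_anc leqnn anc_depth eqxx. Qed.

Lemma is_anc_root x : is_anc r x.
Proof.
have root_anc : anc x 0 = r by apply: depth_eq0; rewrite depth_anc.
by rewrite -root_anc is_anc_anc.
Qed.

Lemma is_anc_parent x : 0 < depth x -> is_anc (parent x) x.
Proof.
move=> depth_gt0; rewrite -{1}(anc_depth x) parent_anc //.
by apply: is_anc_anc; rewrite leq_pred.
Qed.

Lemma is_anc_depth_lt y x : is_anc y x -> y != x -> depth y < depth x.
Proof.
case/andP=> le_yx /eqP anc_xy neq_yx; rewrite ltn_neqAle le_yx andbT.
by apply: contra neq_yx => /eqP eq_depth; rewrite -anc_xy eq_depth anc_depth.
Qed.

Lemma is_anc_between y v x :
  is_anc y x -> is_anc v x -> depth y <= depth v -> is_anc y v.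
Proof.
move=> /andP [_ /eqP anc_xy] /andP [le_vx /eqP anc_xv] le_yv.
by rewrite /is_anc le_yv -anc_xv anc_anc // anc_xy eqxx.
Qed.

Definition subtree y := [set x | is_anc y x].

(* Vertices are indexed in binary by their rank in the enumeration of [T]. *)
Definition bit_cat i j b := [set x | (depth x < i) || (bit j (enum_rank (anc x i)) == b)].

Definition level_cat i := [set x | depth x <= i].

Definition subtree_cats := [set subtree y | y : T].
Definition bit_cats D L := [set bit_cat p.1.1 p.1.2 p.2 | p : 'I_D.+1 * 'I_L * bool].
Definition level_cats D := [set level_cat i | i : 'I_D.+1].
Definition tree_cats D L := subtree_cats :|: bit_cats D L :|: level_cats D.

Variant tree_cats_spec C : Prop :=
  | TreeCatSubtree y of C = subtree y
  | TreeCatBit i j b of C = bit_cat i j b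
  | TreeCatLevel i of C = level_cat i.

Lemma tree_catsP D L C : C \in tree_cats D L -> tree_cats_spec C.
Proof.
rewrite !inE => /orP [/orP [] | ] /imsetP [p _ ->]; last exact: TreeCatLevel.
  exact: TreeCatSubtree.
exact: TreeCatBit.
Qed.

Lemma subtree_in_tree_cats D L y : subtree y \in tree_cats D L.
Proof. by rewrite !inE imset_f. Qed.

Lemma bit_cat_in_tree_cats D L (i : 'I_D.+1) (j : 'I_L) b :
  bit_cat i j b \in tree_cats D L.
Proof. by rewrite !inE; apply/orP; left; apply/orP; right; apply/imsetP; exists (i, j, b). Qed.

Lemma level_cat_in_tree_cats D L (i : 'I_D.+1) : level_cat i \in tree_cats D L.
Proof. by rewrite !inE imset_f ?orbT. Qed.

Lemma tree_cats_anc_closed D L C v x :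
  C \in tree_cats D L -> is_anc v x -> x \in C ->
  (forall y, C = subtree y -> v \in C) -> v \in C.
Proof.
case/tree_catsP=> [y -> _ _ /(_ y erefl) // | i j b -> | i ->];
  rewrite !inE => /andP [le_vx /eqP anc_xv] + _.
  case/orP=> [lt_xi | bit_x]; first by apply/orP; left; exact: leq_ltn_trans le_vx lt_xi.
  by case: (ltnP (depth v) i) => //= le_iv; rewrite -anc_xv anc_anc.
by move/(leq_trans le_vx).
Qed.

Lemma card_cat_subtree_cats u : #|[set C in subtree_cats | u \in C]| <= (depth u).+1.
Proof.
have sub : [set C in subtree_cats | u \in C] \subset
           [set subtree (anc u i) | i : 'I_(depth u).+1].
  apply/subsetP => C; rewrite !inE => /andP [/imsetP [y _ ->]].
  rewrite inE => /andP [le_yu /eqP anc_uy]; apply/imsetP.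
  by exists (Ordinal (le_yu : depth y < (depth u).+1)); rewrite //= anc_uy.
apply: leq_trans (subset_leq_card sub) _.
by apply: leq_trans (leq_imset_card _ _) _; rewrite card_ord.
Qed.

Section TreeCategories.
Variables (D L : nat).
Hypothesis depth_le : forall x, depth x <= D.

Lemma memdim_tree_cats : memdim (tree_cats D L) <= D.+1 * (2 * L + 2).
Proof.
apply/bigmax_leqP => u _.
have cardU (A B : {set {set T}}) : #|A :|: B| <= #|A| + #|B|.
  by rewrite cardsU leq_subr.
have cat_sub : Defs.cat (tree_cats D L) u \subset
    [set C in subtree_cats | u \in C] :|: bit_cats D L :|: level_cats D.
  apply/subsetP => C; rewrite !inE => /andP [/orP [/orP [] | ] CS uC];
  by rewrite CS ?uC ?orbT.
have card_bits : #|bit_cats D L| <= D.+1 * L * 2.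
  by apply: leq_trans (leq_imset_card _ _) _; rewrite !card_prod !card_ord card_bool.
have card_levels : #|level_cats D| <= D.+1.
  by apply: leq_trans (leq_imset_card _ _) _; rewrite card_ord.
have card_subtrees : #|[set C in subtree_cats | u \in C]| <= D.+1.
  by apply: leq_trans (card_cat_subtree_cats u) _; rewrite ltnS.
apply: leq_trans (subset_leq_card cat_sub) _.
apply: leq_trans (cardU _ _) _; apply: leq_trans (leq_add (cardU _ _) (leqnn _)) _.
apply: leq_trans (leq_add (leq_add card_subtrees card_bits) card_levels) _.
nia.
Qed.

Hypothesis e_sym : symmetric e.
Hypothesis card_le : #|T| <= 2 ^ L.

Lemma route_down u w : is_anc u w -> u != w ->
  exists v, e u v /\ cdist (tree_cats D L) v w < cdist (tree_cats D L) u w.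
Proof.
move=> uw neq_uw; have lt_uw := is_anc_depth_lt uw neq_uw.
set v := anc w (depth u).+1.
have depth_v : depth v = (depth u).+1 by rewrite depth_anc.
have vw : is_anc v w by exact: is_anc_anc.
have parent_v : parent v = u.
  by rewrite parent_anc //; case/andP: uw => _ /eqP.
exists v; split; first by rewrite -{1}parent_v parent_edge // depth_v.
apply: cdist_lt => [C CS uC wC | ].
  apply: (tree_cats_anc_closed CS vw wC) => y eq_C.
  move: uC wC; rewrite eq_C !inE => yu yw; apply: (is_anc_between yw vw).
  by rewrite depth_v; case/andP: yu => /leqW.
exists (subtree v); first exact: subtree_in_tree_cats.
by rewrite !inE is_ancxx vw /is_anc depth_v ltnn.
Qed.

Lemma route_up u w : ~~ is_anc u w ->
  exists v, e u v /\ cdist (tree_cats D L) v w < cdist (tree_cats D L) u w.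
Proof.
move=> not_uw; have depth_u_gt0 : 0 < depth u.
  by rewrite lt0n; apply: contra not_uw => /eqP/depth_eq0->; exact: is_anc_root.
set v := parent u.
have depth_v : depth v = (depth u).-1 by exact: depth_parent.
have vu : is_anc v u by exact: is_anc_parent.
exists v; split; first by rewrite e_sym parent_edge.
apply: cdist_lt => [C CS uC wC | ].
  apply: (tree_cats_anc_closed CS vu uC) => y eq_C.
  move: uC wC; rewrite eq_C !inE => yu yw; apply: (is_anc_between yu vu).
  have neq_yu : y != u by apply: contraNneq not_uw => <-.
  by have := is_anc_depth_lt yu neq_yu; rewrite depth_v; lia.
have [lt_wu | le_uw] := ltnP (depth w) (depth u).
  have lt_D : (depth u).-1 < D.+1 by have := depth_le u; lia.
  exists (level_cat (Ordinal lt_D)); first exact: level_cat_in_tree_cats.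
  by rewrite !inE /= depth_v; split; lia.
have neq_anc : anc w (depth u) != u.
  by apply: contraNneq not_uw => anc_wu; rewrite /is_anc le_uw anc_wu eqxx.
have neq_rank : enum_rank (anc w (depth u)) != enum_rank u :> nat.
  by apply: contra neq_anc => /eqP/val_inj/enum_rank_inj->.
have rank_lt x : enum_rank x < 2 ^ L := leq_trans (ltn_ord (enum_rank x)) card_le.
have [j lt_jL neq_bit] := exists_bit_neq (rank_lt _) (rank_lt _) neq_rank.
have lt_uD : depth u < D.+1 by rewrite ltnS.
exists (bit_cat (Ordinal lt_uD) (Ordinal lt_jL) (bit j (enum_rank (anc w (depth u))))).
  exact: bit_cat_in_tree_cats.
rewrite !inE /= eqxx orbT ltnn anc_depth depth_v (eq_sym (bit j (enum_rank u))) neq_bit.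
by split=> //; apply/orP; left; lia.
Qed.

Lemma tree_cats_routing : routing_correct e (tree_cats D L).
Proof.
move=> u w neq_uw; have [uw | not_uw] := boolP (is_anc u w).
  exact: route_down.
exact: route_up.
Qed.

End TreeCategories.
End BreadthFirstTree.

Theorem theorem1 :
  exists C : nat, forall (T : finType) (e : rel T), is_tree e ->
    exists S : {set {set T}}, routing_correct e S /\
      memdim S <= C * (diam e + trunc_log 2 #|T|) ^ 2.
Proof.
exists 12 => T e [[e_sym _] [e_connected _]].
have [card_le1 | card_gt1] := leqP #|T| 1.
  exists set0; split.
    move=> u w neq_uw; suff: 1 < #|T| by rewrite ltnNge card_le1.
    by apply/card_gt1P; exists u, w.
  apply/bigmax_leqP => u _; rewrite (_ : Defs.cat set0 u = set0) ?cards0 //.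
  by apply/setP => C; rewrite !inE.
have /card_gt0P [r _] := ltnW card_gt1.
have /card_gt1P [x [y [_ _ neq_xy]]] := card_gt1.
set t := trunc_log 2 #|T|.
have t_gt0 : 0 < t by rewrite trunc_log_gt0.
have card_le : #|T| <= 2 ^ t.+1 by apply/ltnW/trunc_log_ltn.
have diam_pos := diam_gt0 e_connected neq_xy.
have depth_le := gdist_le_diam e r.
exists (tree_cats e r (diam e) t.+1); split.
  exact: tree_cats_routing.
apply: leq_trans (memdim_tree_cats t.+1 depth_le) _.
have bound : (diam e).+1 * (2 * t.+1 + 2) <= 2 * diam e * (6 * t).
  by apply: leq_mul; lia.
nia.
Qed.
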